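(* Let $C_6$ be the set of $6$-cycles in $S_6$ and $C_{24}^0$ the set of permutations of $\{1,\dots,6\}$ of the form $(1\,x_2)(x_3\,x_4\,x_5\,x_6)$ with $\{x_2,\dots,x_6\}=\{2,\dots,6\}$. For $\sigma=(1\,x_2)(x_3\,x_4\,x_5\,x_6)\in C_{24}^0$ define $$f(\sigma)=\{\sigma,\ (1\,x_3\,x_2\,x_5\,x_4\,x_6),\ (1\,x_4\,x_2\,x_6\,x_5\,x_3),\ (1\,x_5\,x_2\,x_3\,x_6\,x_4),\ (1\,x_6\,x_2\,x_4\,x_3\,x_5)\}$$ (this is well defined, i.e., independent of the cyclic representation of the $4$-cycle). Then for each $\sigma\in C_{24}^0$ the permutation matrices of the five elements of $f(\sigma)$ sum to $J_6-I_6$ (i.e., for every $i\ne j$ exactly one element of $f(\sigma)$ maps $i$ to $j$), and the sets $f(\sigma)$, $\sigma\in C_{24}^0$, are pairwise disjoint with union $C_{24}^0\cup C_6$. Hence $\{f(\sigma):\sigma\in C_{24}^0\}$ is a partition of $C_{24}^0\cup C_6$ into $30$ subsets, each a $1$-factorization of $L_{6,1}$.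
   Context: Permutations are written in cycle notation; the permutation matrix of $\pi$ has a $1$ in position $(i,\pi(i))$. $J_6$ is the $6\times6$ all-ones matrix and $I_6$ the identity. $L_{6,1}=K_{6,6}-6K_{1,1}$ has biadjacency matrix $J_6-I_6$; a $1$-factorization of it is a set of derangement permutation matrices summing to $J_6-I_6$. *)

(* Points 1..6 of the paper are represented by 'I_6 = {0,..,5}
   (paper's point k is ord k.-1; in particular paper's 1 is ord0). *)
From HB Require Import structures.
From mathcomp Require Import all_boot all_order all_algebra all_fingroup.
Set Implicit Arguments. Unset Strict Implicit. Unset Printing Implicit Defensive.

(* The cycle (c_0 c_1 ... c_{k-1}) as a function: c_i |-> c_{i+1 mod k},
   other points fixed.  This is path.v's [next]. *)
Definition cyc (c : seq 'I_6) : 'I_6 -> 'I_6 := next c.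

Definition xx (t : 5.-tuple 'I_6) (k : nat) : 'I_6 := nth ord0 t (k - 2).

(* {x2,...,x6} = {2,...,6} (i.e. all points other than "1" = ord0, distinct) *)
Definition valid_rep (t : 5.-tuple 'I_6) : bool := uniq (ord0 :: val t).

Definition sig_fun (t : 5.-tuple 'I_6) (i : 'I_6) : 'I_6 :=
  cyc [:: ord0; xx t 2] (cyc [:: xx t 3; xx t 4; xx t 5; xx t 6] i).

Definition rep (t : 5.-tuple 'I_6) (s : {perm 'I_6}) : bool :=
  valid_rep t && [forall i, s i == sig_fun t i].

Definition C24_0 : {set {perm 'I_6}} := [set s | [exists t, rep t s]].

Definition C6 : {set {perm 'I_6}} := [set s : {perm 'I_6} | porbits s == [set [set: 'I_6]]].

Definition gfun (t : 5.-tuple 'I_6) (k : 'I_5) : 'I_6 -> 'I_6 :=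
  match val k with
  | 0 => sig_fun t
  | 1 => cyc [:: ord0; xx t 3; xx t 2; xx t 5; xx t 4; xx t 6]
  | 2 => cyc [:: ord0; xx t 4; xx t 2; xx t 6; xx t 5; xx t 3]
  | 3 => cyc [:: ord0; xx t 5; xx t 2; xx t 3; xx t 6; xx t 4]
  | _ => cyc [:: ord0; xx t 6; xx t 2; xx t 4; xx t 3; xx t 5]
  end.

Definition fx (t : 5.-tuple 'I_6) : {set {perm 'I_6}} :=
  [set tau : {perm 'I_6} | [exists k : 'I_5, [forall i, tau i == gfun t k i]]].

Definition f (s : {perm 'I_6}) : {set {perm 'I_6}} :=
  if [pick t | rep t s] is Some t then fx t else set0.

Definition JmI : 'M[int]_6 := (const_mx 1 - 1%:M)%R.

From HB Require Import structures.
From mathcomp Require Import all_boot all_order all_algebra all_fingroup.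
Set Implicit Arguments. Unset Strict Implicit. Unset Printing Implicit Defensive.
Import GRing.Theory.

(* A permutation sigma of C_24^0 has four representations t = (x2,...,x6)
   (one per rotation of its 4-cycle); valid representations are exactly the
   orderings of the points 2..6, collected in the list [reps] (120 entries).  Four boolean facts about [reps] are checked by evaluation: each
   representation gives five distinct injective functions whose values at
   every pair i <> j hit j exactly once, the four non-sigma ones being 6-cycles
   (0 p); two representations either give the same sigma and the same five
   functions, or different sigmas and disjoint families; every 6-cycle (0 p)
   occurs in some family; and there are 30 distinct sigmas. *)

(* A computable enumeration of 'I_n: [enum 'I_n] does not evaluate in the
   kernel's virtual machine because ordinal construction goes through opaque
   proofs, whereas [lift] only carries its proof along. *)
Fixpoint ords (n : nat) : seq 'I_n :=
  if n is m.+1 then ord0 :: map (lift ord0) (ords m) else [::].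

Lemma mem_ords n (i : 'I_n) : i \in ords n.
Proof.
elim: n i => [[] //|n IHn] i /=; rewrite inE.
by case: (unliftP ord0 i) => [j ->|->]; rewrite ?eqxx // (map_f _ (IHn j)) orbT.
Qed.

Lemma uniq_ords n : uniq (ords n).
Proof.
elim: n => //= n IHn; rewrite (map_inj_uniq (@lift_inj _ ord0)) IHn andbT.
by apply/mapP => -[j _ /eqP]; rewrite (negbTE (neq_lift _ _)).
Qed.

Lemma perm_ords n : perm_eq (ords n) (enum 'I_n).
Proof.
apply: uniq_perm; rewrite ?enum_uniq ?uniq_ords // => i.
by rewrite mem_enum mem_ords.
Qed.

Lemma ords_injective n (rT : eqType) (g : 'I_n -> rT) :
  uniq (map g (ords n)) -> injective g.
Proof.
move=> Ug; apply/injectiveP.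
by rewrite /injectiveb /dinjectiveb -(perm_uniq (perm_map g (perm_ords n))).
Qed.

Lemma sum_count (R : nzSemiRingType) (I : Type) (s : seq I) (P : pred I) :
  (\sum_(k <- s) (P k)%:R = (count P s)%:R :> R)%R.
Proof. by elim: s => [|k s IHs]; rewrite ?big_nil ?big_cons //= IHs natrD. Qed.

Definition code (g : 'I_6 -> 'I_6) : seq 'I_6 := map g (ords 6).

Lemma codeP (g h : 'I_6 -> 'I_6) : code g = code h <-> g =1 h.
Proof.
split=> [/eq_in_map gh i | gh]; first exact: gh (mem_ords i).
by apply/eq_in_map => i _; apply: gh.
Qed.

Lemma code_inj : injective (fun s : {perm 'I_6} => code s).
Proof. by move=> s u /codeP su; apply/permP. Qed.

Section FullCycles.
Variable T : finType.
Implicit Types (s : {perm T}) (c : seq T) (x y : T).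

Lemma porbit_fconnect s x y : (y \in porbit s x) = fconnect s x y.
Proof.
apply/porbitP/idP => [[i ->] | ]; first by rewrite permX fconnect_iter.
by rewrite fconnect_orbit => /trajectP[i _ ->]; exists i; rewrite permX.
Qed.

Lemma porbits_full s (x0 : T) :
  porbits s = [set setT] <-> forall x y, fconnect s x y.
Proof.
split=> [full x y | conn].
  have : porbit s x \in porbits s by apply: imset_f.
  by rewrite full inE -porbit_fconnect => /eqP->; rewrite inE.
have orbT x : porbit s x = setT.
  by apply/setP => y; rewrite porbit_fconnect conn inE.
apply/setP => A; rewrite inE; apply/imsetP/eqP => [[x _ ->] | ->].
  exact: orbT.
by exists x0; rewrite ?orbT.
Qed.

Lemma next_full_cycle s c (x0 : T) :
  uniq c -> (forall x, x \in c) -> s =1 next c -> porbits s = [set setT].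
Proof.
move=> Uc cover sc; apply/(porbits_full s x0) => x y.
have cyc_s : fcycle s c.
  rewrite (@eq_cycle _ _ (frel (next c))) ?cycle_next // => a b.
  by rewrite /frel /= sc.
by rewrite (fconnect_cycle cyc_s (cover x)) cover.
Qed.

Lemma orbit_full_cycle s x : porbits s = [set setT] ->
  [/\ uniq (fingraph.orbit s x), forall y, y \in fingraph.orbit s x
    & s =1 next (fingraph.orbit s x)].
Proof.
move=> /(porbits_full s x) conn.
have cover y : y \in fingraph.orbit s x by rewrite -fconnect_orbit.
split=> // y; apply/eqP; exact: next_cycle (cycle_orbit (@perm_inj _ s) x) (cover y).
Qed.
End FullCycles.

Lemma C6P (s : {perm 'I_6}) :
  reflect (exists2 t : 5.-tuple 'I_6, valid_rep t & s =1 cyc (ord0 :: t))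
          (s \in C6).
Proof.
rewrite inE; apply: (iffP eqP) => [full | [t Ut st]].
  have [U cover snext] := orbit_full_cycle ord0 full.
  move: U cover snext; rewrite /fingraph.orbit -orderSpred [traject _ _ _.+1]/=.
  set p := traject _ _ _ => U cover snext.
  have size_p : size p == 5.
    change (size (ord0 :: p) == 6).
    rewrite -(card_uniqP U) -[X in _ == X](card_ord 6).
    by apply/eqP/eq_card => x; rewrite cover.
  by exists (Tuple size_p).
have size_t : size (enum 'I_6) <= size (ord0 :: t).
  by rewrite size_enum_ord /= size_tuple.
have [_ cover] := uniq_min_size Ut (fun x _ => mem_enum predT x) size_t.
by apply: next_full_cycle ord0 Ut _ st => x; rewrite cover mem_enum.
Qed.

(* Representations as evaluable tuples: [pad5] turns a list into a 5-tuple
   without computing a size proof, and is the identity on 5-tuples. *)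
Lemma pad5P (s : seq 'I_6) : size (take 5 (s ++ nseq 5 ord0)) == 5.
Proof. by rewrite size_takel // size_cat size_nseq leq_addl. Qed.

Definition pad5 (s : seq 'I_6) : 5.-tuple 'I_6 := Tuple (pad5P s).

Lemma pad5K (t : 5.-tuple 'I_6) : pad5 t = t.
Proof. by apply: val_inj; rewrite /= take_size_cat ?size_tuple. Qed.

Definition reps : seq (5.-tuple 'I_6) :=
  map pad5 (permutations (behead (ords 6))).

Lemma valid_reps (t : 5.-tuple 'I_6) : valid_rep t -> t \in reps.
Proof.
case/andP=> t0 Ut; rewrite -(pad5K t); apply: map_f; rewrite mem_permutations.
have sub_t : {subset t <= behead (ords 6)}.
  move=> x tx; move: (mem_ords x); rewrite [ords 6]/= inE.
  by case: eqP tx => [-> | _ //]; rewrite (negbTE t0).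
have size_t : size (behead (ords 6)) <= size t by rewrite size_tuple.
have [_ eq_t] := uniq_min_size Ut sub_t size_t.
exact: uniq_perm.
Qed.

Definition fcodes (t : 5.-tuple 'I_6) : seq (seq 'I_6) :=
  [seq code (gfun t k) | k <- ords 5].

Definition cycle_codes : seq (seq 'I_6) :=
  [seq code (cyc (ord0 :: t)) | t : 5.-tuple 'I_6 <- reps].

Definition good_rep (t : 5.-tuple 'I_6) : bool :=
  [&& valid_rep t,
      all (fun k => uniq (code (gfun t k))) (ords 5),
      uniq (fcodes t),
      all (fun i => all (fun j =>
             count (fun k => gfun t k i == j) (ords 5) == (i != j)) (ords 6)) (ords 6)
    & all (fun k => (k == ord0) || (code (gfun t k) \in cycle_codes)) (ords 5)].

Definition compatible (t u : 5.-tuple 'I_6) : bool :=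
  if code (sig_fun t) == code (sig_fun u)
  then all (fun c => c \in fcodes u) (fcodes t)
  else ~~ has (fun c => c \in fcodes u) (fcodes t).

Lemma reps_good : all good_rep reps.
Proof. by vm_compute. Qed.

Lemma reps_compatible : all (fun t => all (compatible t) reps) reps.
Proof. by vm_compute. Qed.

Lemma cycles_covered : all (fun t : 5.-tuple 'I_6 =>
  has (fun u => code (cyc (ord0 :: t)) \in fcodes u) reps) reps.
Proof. by vm_compute. Qed.

Lemma sigma_count : size (undup [seq code (sig_fun t) | t <- reps]) = 30.
Proof. by vm_compute. Qed.

Lemma fxP (t : 5.-tuple 'I_6) (tau : {perm 'I_6}) :
  reflect (code tau \in fcodes t) (tau \in fx t).
Proof.
rewrite in_set; apply: (iffP existsP) => [[k /forallP tk] | /mapP[k _ /codeP tk]].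
  by apply/mapP; exists k; rewrite ?mem_ords //; apply/codeP => i; apply/eqP.
by exists k; apply/forallP => i; rewrite tk.
Qed.

Lemma rep_valid (t : 5.-tuple 'I_6) (s : {perm 'I_6}) : rep t s -> valid_rep t.
Proof. by case/andP. Qed.

Lemma rep_fun (t : 5.-tuple 'I_6) (s : {perm 'I_6}) : rep t s -> s =1 sig_fun t.
Proof. by case/andP=> _ /forallP st i; apply/eqP. Qed.

Lemma C24P (s : {perm 'I_6}) : reflect (exists t, rep t s) (s \in C24_0).
Proof. by rewrite inE; apply: existsP. Qed.

Section OneRepresentation.
Variable t : 5.-tuple 'I_6.
Hypothesis Vt : valid_rep t.

Let good_t : good_rep t := allP reps_good t (valid_reps Vt).

Lemma gfun_inj (k : 'I_5) : injective (gfun t k).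
Proof.
case/and5P: good_t => _ /allP inj _ _ _.
by apply: ords_injective; apply: inj; apply: mem_ords.
Qed.

Definition fperm (k : 'I_5) : {perm 'I_6} := perm (@gfun_inj k).

Lemma fpermE (k : 'I_5) : fperm k =1 gfun t k.
Proof. exact: permE. Qed.

Lemma fperm_inj : injective fperm.
Proof.
case/and5P: good_t => _ _ /ords_injective fcode_inj _ _ k k' /permP kk'.
by apply: fcode_inj; apply/codeP => i; rewrite -!fpermE kk'.
Qed.

Lemma fx_fperm : fx t = [set fperm k | k : 'I_5].
Proof.
apply/setP => tau; rewrite inE.
apply/existsP/imsetP => [[k /forallP tk] | [k _ ->]].
  by exists k => //; apply/permP => i; rewrite fpermE; apply/eqP.
by exists k; apply/forallP => i; rewrite fpermE.
Qed.

Lemma rep_sigma : rep t (fperm ord0).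
Proof. by rewrite /rep Vt; apply/forallP => i; rewrite fpermE. Qed.

Lemma sum_fx : (\sum_(tau in fx t) perm_mx tau)%R = JmI.
Proof.
case/and5P: good_t => _ _ _ /allP rows _.
rewrite fx_fperm big_imset /=; last by move=> k k' _ _; apply: fperm_inj.
apply/matrixP => i j; rewrite summxE.
rewrite (eq_bigr (fun k => (gfun t k i == j)%:R%R)) => [|k _]; last first.
  by rewrite !mxE fpermE.
rewrite -big_enum (perm_big (ords 5)); last by rewrite perm_sym perm_ords.
rewrite sum_count (eqP (allP (rows i (mem_ords i)) j (mem_ords j))) !mxE.
by case: (i == j).
Qed.

Lemma fx_sub : fx t \subset C24_0 :|: C6.
Proof.
case/and5P: good_t => _ _ _ _ /allP cyc_k.
rewrite fx_fperm; apply/subsetP => _ /imsetP[k _ ->]; rewrite in_setU.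
case/orP: (cyc_k k (mem_ords k)) => [/eqP-> | /mapP[u Ru /codeP tu]].
  by apply/orP; left; apply/C24P; exists t; apply: rep_sigma.
apply/orP; right; apply/C6P; exists u; first by case/and5P: (allP reps_good u Ru).
by move=> i; rewrite fpermE tu.
Qed.
End OneRepresentation.

Lemma fx_compatible (t u : 5.-tuple 'I_6) : valid_rep t -> valid_rep u ->
  if code (sig_fun t) == code (sig_fun u) then fx t \subset fx u
  else [disjoint fx t & fx u].
Proof.
move=> /valid_reps Rt /valid_reps Ru.
have := allP (allP reps_compatible t Rt) u Ru; rewrite /compatible.
case: (code (sig_fun t) == code (sig_fun u)) => [/allP sub | /hasPn disj].
  by apply/subsetP => tau /fxP/sub/fxP.
apply/pred0P => tau /=; apply/negP => /andP[/fxP Ht /fxP Hu].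
by case/negP: (disj _ Ht).
Qed.

Lemma fx_well_defined (s : {perm 'I_6}) (t u : 5.-tuple 'I_6) :
  rep t s -> rep u s -> fx t = fx u.
Proof.
move=> Ht Hu; have same : code (sig_fun t) = code (sig_fun u).
  by apply/codeP => i; rewrite -(rep_fun Ht) -(rep_fun Hu).
have := fx_compatible (rep_valid Ht) (rep_valid Hu).
have := fx_compatible (rep_valid Hu) (rep_valid Ht).
rewrite same eqxx => /subsetP sub_ut /subsetP sub_tu.
by apply/setP => tau; apply/idP/idP => [/sub_tu | /sub_ut].
Qed.

Lemma f_rep (s : {perm 'I_6}) (t : 5.-tuple 'I_6) : rep t s -> f s = fx t.
Proof.
move=> Ht; rewrite /f; case: pickP => [u Hu | /(_ t)]; last by rewrite Ht.
exact: fx_well_defined Hu Ht.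
Qed.

Lemma mem_f_self (s : {perm 'I_6}) : s \in C24_0 -> s \in f s.
Proof.
case/C24P => t Ht; rewrite (f_rep Ht); apply/fxP/mapP.
by exists ord0; [apply: mem_ords | apply/codeP => i; rewrite (rep_fun Ht)].
Qed.

Lemma f_disjoint (s s' : {perm 'I_6}) : s \in C24_0 -> s' \in C24_0 -> s != s' ->
  [disjoint f s & f s'].
Proof.
case/C24P => t Ht /C24P[u Hu] neq; rewrite (f_rep Ht) (f_rep Hu).
have := fx_compatible (rep_valid Ht) (rep_valid Hu); case: eqP => // /codeP same.
by case/eqP: neq; apply/permP => i; rewrite (rep_fun Ht) (rep_fun Hu) same.
Qed.

Lemma f_cover : \bigcup_(s in C24_0) f s = C24_0 :|: C6.
Proof.
apply/eqP; rewrite eqEsubset; apply/andP; split.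
  by apply/bigcupsP => s /C24P[t Ht]; rewrite (f_rep Ht) fx_sub // (rep_valid Ht).
apply/subsetP => tau; rewrite in_setU => /orP[C24tau | /C6P[p Vp tau_p]].
  by apply/bigcupP; exists tau; last exact: mem_f_self.
have /hasP[u Ru tau_u] := allP cycles_covered p (valid_reps Vp).
have Vu : valid_rep u by case/and5P: (allP reps_good u Ru).
apply/bigcupP; exists (fperm Vu ord0); first by apply/C24P; exists u; apply: rep_sigma.
rewrite (f_rep (rep_sigma Vu)); apply/fxP.
by rewrite (_ : code tau = code (cyc (ord0 :: p))) //; apply/codeP.
Qed.

(* C_24^0 is in bijection with the 30 distinct value lists of the sigmas. *)
Lemma card_C24 : #|C24_0| = 30.
Proof.
rewrite cardE -(size_map (fun s : {perm 'I_6} => code s)) -sigma_count.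
apply/perm_size/uniq_perm; rewrite ?undup_uniq ?(map_inj_uniq code_inj) ?enum_uniq //.
move=> c; rewrite mem_undup; apply/mapP/mapP => [[s] | [t Rt ->]].
  rewrite mem_enum => /C24P[t Ht] ->; exists t; first exact: valid_reps (rep_valid Ht).
  by apply/codeP; apply: rep_fun.
have Vt : valid_rep t by case/and5P: (allP reps_good t Rt).
exists (fperm Vt ord0); first by rewrite mem_enum; apply/C24P; exists t; apply: rep_sigma.
by apply/codeP => i; rewrite fpermE.
Qed.

Lemma f_inj : {in C24_0 &, injective f}.
Proof.
move=> s s' Hs Hs' fss'; apply/eqP; apply: contraT => /(f_disjoint Hs Hs').
by rewrite fss' => /disjointFr/(_ (mem_f_self Hs')); rewrite mem_f_self.
Qed.

Theorem mainTheorem5 :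
  (forall (s : {perm 'I_6}) (t u : 5.-tuple 'I_6), rep t s -> rep u s -> fx t = fx u) /\
  (forall s, s \in C24_0 -> (\sum_(tau in f s) perm_mx tau)%R = JmI) /\
  (forall s s', s \in C24_0 -> s' \in C24_0 -> s != s' -> [disjoint f s & f s']) /\
  \bigcup_(s in C24_0) f s = C24_0 :|: C6 /\
  partition [set f s | s in C24_0] (C24_0 :|: C6) /\
  #|[set f s | s in C24_0]| = 30.
Proof.
split; first exact: fx_well_defined.
split; first by move=> s /C24P[t Ht]; rewrite (f_rep Ht) sum_fx // (rep_valid Ht).
split; first exact: f_disjoint.
split; first exact: f_cover.
split; last by rewrite card_in_imset ?card_C24 //; apply: f_inj.
apply/and3P; split; first by rewrite cover_imset f_cover.
  apply/trivIsetP => _ _ /imsetP[s Hs ->] /imsetP[s' Hs' ->] neq.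
  by apply: f_disjoint => //; apply: contraNneq neq => ->.
by apply/imsetP => -[s Hs e]; have := mem_f_self Hs; rewrite -e inE.
Qed.
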